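(* If $t\in[0,1/2]$, then $w(t,a)/W(t,a)\le \frac{68-5\sqrt{10}}{72}$ for all $a\in[(3t+2)/4,2]$.
   Context: For $(t,a)\in\mathbb R^2$ define $w_1(t,a)=(2t+3)a-(3t^2/4+t)$, $w_2(t,a)=(4t+4)a-(3t^2/2+2t+2)$, $w_3(t,a)=8ta-(3t^2+4t-4)$, $W(t,a)=[(t+2)a-(t^2/2+t)](t+2)$, and $w(t,a)=\min\{w_1(t,a),w_2(t,a),w_3(t,a)\}$. *)

From Stdlib Require Import Reals.
Open Scope R_scope.

Definition w1 (t a : R) : R := (2*t+3)*a - (3*t^2/4 + t).
Definition w2 (t a : R) : R := (4*t+4)*a - (3*t^2/2 + 2*t + 2).
Definition w3 (t a : R) : R := 8*t*a - (3*t^2 + 4*t - 4).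
Definition WW (t a : R) : R := ((t+2)*a - (t^2/2 + t)) * (t+2).
Definition w (t a : R) : R := Rmin (w1 t a) (Rmin (w2 t a) (w3 t a)).

From Stdlib Require Import Reals Lra Psatz.
Open Scope R_scope.

(* For fixed t, both w and c W are piecewise affine in a, where c is the
   claimed bound: each w_i - c W is affine in a, w_2 - c W is increasing while
   w_3 - c W (and, for t >= t0 := (14 - 4 sqrt 10)/9, also w_1 - c W) is
   decreasing.  The minimum of an increasing and a decreasing affine function
   is at most its value where the two cross, so it suffices that w_2 - c W is
   nonpositive at the crossing point with w_3 (for t <= t0) or with w_1 (for
   t >= t0).  Up to a positive factor these crossing values are quartics in t
   vanishing at t0, where w_1, w_2, w_3 cross simultaneously and the bound is
   attained. *)

Lemma opposite_slopes_nonpos (p q u v : R) :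
  0 <= p -> q <= 0 -> v <= 0 -> p * u + v <= 0 \/ q * u + v <= 0.
Proof. intros Hp Hq Hv; destruct (Rle_or_lt u 0); [left | right]; nra. Qed.

Lemma w_le_w1 (t a : R) : w t a <= w1 t a.
Proof. apply Rmin_l. Qed.

Lemma w_le_w2 (t a : R) : w t a <= w2 t a.
Proof. eapply Rle_trans; [apply Rmin_r | apply Rmin_l]. Qed.

Lemma w_le_w3 (t a : R) : w t a <= w3 t a.
Proof. eapply Rle_trans; [apply Rmin_r | apply Rmin_r]. Qed.

Lemma WW_pos (t a : R) : 0 <= t -> (3*t+2)/4 <= a -> 0 < WW t a.
Proof. intros Ht Ha; unfold WW; nra. Qed.

(* w2 t a = w3 t a iff (4 - 4t) a = crossing23 t,
   and w1 t a = w2 t a iff (1 + 2t) a = crossing12 t. *)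
Definition crossing23 (t : R) : R := 6 - 2*t - 3/2*t^2.
Definition crossing12 (t : R) : R := 2 + t + 3/4*t^2.

Section CrossingBound.

Variable s : R.
Hypothesis s_sq : s * s = 10.
Hypothesis s_pos : 0 < s.

Let c : R := (68 - 5*s) / 72.
Let t0 : R := (14 - 4*s) / 9.

Lemma s_between : 3.16 < s < 3.163.
Proof. split; nra. Qed.

Definition slope1 (t : R) : R := 2*t + 3 - c * (t+2)^2.
Definition slope2 (t : R) : R := 4*t + 4 - c * (t+2)^2.
Definition slope3 (t : R) : R := 8*t - c * (t+2)^2.

Definition q23 (t : R) : R :=
  (20/3 + 5/6*s) + (-31/9 - 29/36*s)*t + (1 + s/8)*t^2 + (-17/36 + 5/144*s)*t^3.
Definition q12 (t : R) : R :=
  (-1/9 - 7/18*s) + (5/6 - 11/24*s)*t + (11/12 - s/6)*t^2 + (17/72 - 5/288*s)*t^3.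

Lemma slope2_nonneg (t : R) : 0 <= t <= 1/2 -> 0 <= slope2 t.
Proof. pose proof s_between; intros; unfold slope2, c; nra. Qed.

Lemma slope3_nonpos (t : R) : 0 <= t <= 1/2 -> slope3 t <= 0.
Proof. pose proof s_between; intros; unfold slope3, c; nra. Qed.

Lemma slope1_nonpos (t : R) : t0 <= t <= 1/2 -> slope1 t <= 0.
Proof.
  intros [Ht0 Ht1]; pose proof s_between as [Hs0 Hs1].
  assert (Hdecr : slope1 t <= slope1 t0).
  { assert (Hc : 2 <= c * (t + t0 + 4)) by (unfold c, t0 in *; nra).
    assert (E : slope1 t - slope1 t0 = (t - t0) * (2 - c * (t + t0 + 4)))
      by (unfold slope1; ring).
    nra. }
  assert (slope1 t0 < 0) by (unfold slope1, t0, c; nra).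
  lra.
Qed.

Lemma q23_nonneg (t : R) : 0 <= t <= 1/2 -> 0 <= q23 t.
Proof.
  intros Ht; pose proof s_between.
  assert (0 <= t^2 <= 1/4) by nra.
  assert (0 <= t^3 <= 1/8) by nra.
  unfold q23; nra.
Qed.

Lemma q12_nonpos (t : R) : 0 <= t <= 1/2 -> q12 t <= 0.
Proof.
  intros Ht; pose proof s_between.
  assert (0 <= t^2 <= 1/4) by nra.
  assert (0 <= t^3 <= 1/8) by nra.
  unfold q12; nra.
Qed.

(* As polynomial identities in s these hold only modulo s^2 - 10; the
   multiple of s^2 - 10 is made explicit. *)
Lemma crossing23_value (t : R) :
  slope2 t * crossing23 t + (4 - 4*t) * (w2 t 0 - c * WW t 0) = (t - t0) * q23 t.
Proof.
  transitivity ((t - t0) * q23 t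
    + (s*s - 10) * (-10/27 + 29/81*t - 1/18*t^2 - 5/324*t^3)).
  - unfold slope2, crossing23, w2, WW, q23, t0, c; field.
  - rewrite s_sq; ring.
Qed.

Lemma crossing12_value (t : R) :
  slope2 t * crossing12 t + (1 + 2*t) * (w2 t 0 - c * WW t 0) = (t - t0) * q12 t.
Proof.
  transitivity ((t - t0) * q12 t
    + (s*s - 10) * (14/81 + 11/54*t + 2/27*t^2 + 5/648*t^3)).
  - unfold slope2, crossing12, w2, WW, q12, t0, c; field.
  - rewrite s_sq; ring.
Qed.

Lemma w_le_bound_below_t0 (t a : R) : 0 <= t <= t0 -> w t a <= c * WW t a.
Proof.
  intros Ht.
  assert (Ht' : 0 <= t <= 1/2) by (pose proof s_between; unfold t0 in *; lra).
  set (u := (4 - 4*t) * a - crossing23 t).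
  assert (E2 : (4 - 4*t) * (w2 t a - c * WW t a) = slope2 t * u + (t - t0) * q23 t).
  { rewrite <- crossing23_value; unfold u, slope2, crossing23, w2, WW; field. }
  assert (E3 : (4 - 4*t) * (w3 t a - c * WW t a) = slope3 t * u + (t - t0) * q23 t).
  { rewrite <- crossing23_value; unfold u, slope2, slope3, crossing23, w2, w3, WW; field. }
  assert (Hv : (t - t0) * q23 t <= 0) by (pose proof (q23_nonneg t Ht'); nra).
  destruct (opposite_slopes_nonpos (slope2 t) (slope3 t) u _
              (slope2_nonneg t Ht') (slope3_nonpos t Ht') Hv) as [H | H].
  - pose proof (w_le_w2 t a); nra.
  - pose proof (w_le_w3 t a); nra.
Qed.

Lemma w_le_bound_above_t0 (t a : R) : t0 <= t <= 1/2 -> w t a <= c * WW t a.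
Proof.
  intros Ht.
  assert (Ht' : 0 <= t <= 1/2) by (pose proof s_between; unfold t0 in *; lra).
  set (u := (1 + 2*t) * a - crossing12 t).
  assert (E2 : (1 + 2*t) * (w2 t a - c * WW t a) = slope2 t * u + (t - t0) * q12 t).
  { rewrite <- crossing12_value; unfold u, slope2, crossing12, w2, WW; field. }
  assert (E1 : (1 + 2*t) * (w1 t a - c * WW t a) = slope1 t * u + (t - t0) * q12 t).
  { rewrite <- crossing12_value; unfold u, slope1, slope2, crossing12, w1, w2, WW; field. }
  assert (Hv : (t - t0) * q12 t <= 0) by (pose proof (q12_nonpos t Ht'); nra).
  destruct (opposite_slopes_nonpos (slope2 t) (slope1 t) u _
              (slope2_nonneg t Ht') (slope1_nonpos t Ht) Hv) as [H | H].
  - pose proof (w_le_w2 t a); nra.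
  - pose proof (w_le_w1 t a); nra.
Qed.

Lemma w_le_scaled_WW (t a : R) : 0 <= t <= 1/2 -> w t a <= (68 - 5*s) / 72 * WW t a.
Proof.
  intros Ht; destruct (Rle_or_lt t t0).
  - apply w_le_bound_below_t0; lra.
  - apply w_le_bound_above_t0; lra.
Qed.

End CrossingBound.

Theorem lemmaA8 (t a : R) :
  0 <= t <= 1/2 -> (3*t+2)/4 <= a <= 2 ->
  w t a / WW t a <= (68 - 5 * sqrt 10) / 72.
Proof.
  intros Ht [Ha _].
  assert (Hs : sqrt 10 * sqrt 10 = 10) by (apply sqrt_sqrt; lra).
  assert (Hs0 : 0 < sqrt 10) by (apply sqrt_lt_R0; lra).
  pose proof (WW_pos t a (proj1 Ht) Ha) as HW.
  apply (Rmult_le_reg_r (WW t a)); [exact HW |].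
  replace (w t a / WW t a * WW t a) with (w t a) by (field; lra).
  exact (w_le_scaled_WW (sqrt 10) Hs Hs0 t a Ht).
Qed.
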